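(* Let $p$ be an odd prime, $r\ge1$, and $d_{1},\dots,d_{r}$ square-free integers. (1) If $p\nmid d_{1}$, then all the primes above $p$ split completely in $\mathbb{Q}_{\infty}(\sqrt{d_{1}},\sqrt{d_{2}},\dots,\sqrt{d_{r}})/\mathbb{Q}_{\infty}(\sqrt{d_{2}},\dots,\sqrt{d_{r}})$. (2) If $p\nmid\prod_{i=1}^{r-1}d_{i}$, then all the primes above $p$ split completely in $\mathbb{Q}_{\infty}(\sqrt{d_{1}},\dots,\sqrt{d_{r-1}})/\mathbb{Q}_{\infty}$.
   Context: $\mathbb{Q}_\infty=\bigcup_{n\ge0}\mathbb{Q}(\zeta_{2^{n+2}}+\zeta_{2^{n+2}}^{-1})$ is the cyclotomic $\mathbb{Z}_2$-extension of $\mathbb{Q}$. *)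

From mathcomp Require Import all_boot all_order all_algebra all_field.
Set Implicit Arguments. Unset Strict Implicit. Unset Printing Implicit Defensive.
Import Order.TTheory GRing.Theory Num.Theory.
Local Open Scope ring_scope.

(* All fields are subfields of the algebraic closure algC, given as
   Prop-valued predicates (sets) algC -> Prop. *)
Definition subsetC := algC -> Prop.

Definition Qbase : subsetC := fun x => exists q : rat, x = ratr q.

Definition adj (R : subsetC) (a : algC) : subsetC :=
  fun x => exists2 c : seq algC, (forall i, (i < size c)%N -> R c`_i) &
             x = \sum_(i < size c) c`_i * a ^+ i.

(* Q[a_1,...,a_k]; since all a_i are algebraic this is the field Q(a_1,...,a_k). *)
Definition Qadj (s : seq algC) : subsetC := foldr (fun a R => adj R a) Qbase s.

Definition Qinf_adj (s : seq algC) : subsetC :=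
  fun x => exists n : nat, exists2 z : algC,
     (2 ^ n.+2)%N.-primitive_root z & Qadj (z + z^-1 :: s) x.

Definition Qinf : subsetC := Qinf_adj [::].

Definition ints (K : subsetC) : subsetC := fun x => K x /\ x \in Aint.

Definition prime_above (K : subsetC) (p : nat) (P : subsetC) : Prop :=
  [/\ (forall x, P x -> ints K x), P 0,
      (forall x y, P x -> P y -> P (x - y)),
      (forall a x, ints K a -> P x -> P (a * x))
    & [/\ ~ P 1,
        (forall x y, ints K x -> ints K y -> P (x * y) -> P x \/ P y)
      & P p%:R]].

Definition lies_over (K : subsetC) (Q P : subsetC) : Prop :=
  forall x, K x -> (Q x <-> P x).

Definition ext_degree (K L : subsetC) (n : nat) : Prop :=
  (forall x, K x -> L x) /\
  exists b : 'I_n -> algC,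
    [/\ forall i, L (b i),
        (forall c : 'I_n -> algC, (forall i, K (c i)) ->
            \sum_i c i * b i = 0 -> forall i, c i = 0)
      & (forall x, L x -> exists2 c : 'I_n -> algC,
            (forall i, K (c i)) & x = \sum_i c i * b i)].

Definition splits_completely_above (p : nat) (K L : subsetC) : Prop :=
  forall n, ext_degree K L n ->
  forall P, prime_above K p P ->
  exists Qs : 'I_n -> subsetC,
    [/\ (forall i, prime_above L p (Qs i) /\ lies_over K (Qs i) P),
        (forall i j, i != j -> exists x, ~ (Qs i x <-> Qs j x))
      & (forall Q, prime_above L p Q -> lies_over K Q P ->
           exists i, forall x, Q x <-> Qs i x)].

Definition squarefree_int (d : int) : Prop :=
  d != 0 /\ forall m : nat, (m * m %| `|d|)%N -> m = 1%N.

Definition sqrt_int (d : int) : algC := sqrtC (d%:~R).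

(* Let K = Q_oo(sqrt d_2, ..., sqrt d_r) and P a prime of K above the odd
   prime p. The key fact is that every integer a prime to p is a square modulo
   P. With zeta a primitive 2^(p+2)-th root of unity, the elements
   e_j = zeta^(2^j) + zeta^(-2^j) of K satisfy e_(j+1) = e_j^2 - 2 and e_p = 0.
   If e_0, ..., e_p were all congruent to rational integers modulo P, their
   residues would be p + 1 distinct elements of F_p, because the orbit of 0
   under x |-> x^2 - 2 never returns to 0. So for some j, e_j is not congruent
   to an integer but e_(j+1) is congruent to some m. Then m + 2 is a nonsquare
   mod p that is a square mod P, and every a prime to p is a square mod p or
   m + 2 times one.
   If b^2 = a mod P and sqrt a is not in K, then x = u + v sqrt a |-> u + v b
   and x |-> u - v b (scaled by 2a, which makes u and v integral) have kernels
   Q_b and Q_(-b) in the integers of K(sqrt a). These are two distinct primes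
   over P. Any prime over P contains (sqrt a - b)(sqrt a + b), so it is one of
   them. Part (2) follows by induction up the tower of quadratic extensions,
   where the degree doubles at each proper step. *)

From Pilot Require Import Defs.
From mathcomp Require Import all_boot all_order all_algebra all_field ring zify.
From Stdlib Require Import Classical FunctionalExtensionality PropExtensionality.
Set Implicit Arguments. Unset Strict Implicit. Unset Printing Implicit Defensive.
Import Order.TTheory GRing.Theory Num.Theory.
Local Open Scope ring_scope.
(* finset and prime export their own subsetC and prime_above. *)
Local Notation subsetC := Defs.subsetC.
Local Notation prime_above := Defs.prime_above.

Definition subringQ (S : subsetC) :=
  [/\ forall q : rat, S (ratr q), forall x y, S x -> S y -> S (x + y),
      forall x, S x -> S (- x) & forall x y, S x -> S y -> S (x * y)].

Definition fieldQ (K : subsetC) := subringQ K /\ forall x, K x -> x != 0 -> K x^-1.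

Section SubringQ.
Variable S : subsetC.
Hypothesis hS : subringQ S.

Lemma sr_rat q : S (ratr q). Proof. by case: hS => h _ _ _; apply: h. Qed.
Lemma srD x y : S x -> S y -> S (x + y). Proof. by case: hS => _ h _ _; apply: h. Qed.
Lemma srN x : S x -> S (- x). Proof. by case: hS => _ _ h _; apply: h. Qed.
Lemma srM x y : S x -> S y -> S (x * y). Proof. by case: hS => _ _ _ h; apply: h. Qed.
Lemma srB x y : S x -> S y -> S (x - y). Proof. by move=> ? ?; apply/srD/srN. Qed.
Lemma sr_int (m : int) : S m%:~R. Proof. by rewrite -(rmorph_int ratr); apply: sr_rat. Qed.
Lemma sr_nat n : S n%:R. Proof. exact: (sr_int n). Qed.
Lemma sr0 : S 0. Proof. exact: (sr_nat 0). Qed.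
Lemma sr1 : S 1. Proof. exact: (sr_nat 1). Qed.
Lemma srX x n : S x -> S (x ^+ n).
Proof. by move=> Sx; elim: n => [|n IH]; rewrite ?expr0 ?exprS; [apply: sr1 | apply: srM]. Qed.
Lemma sr_sum (I : finType) (F : I -> algC) : (forall i, S (F i)) -> S (\sum_i F i).
Proof. by move=> SF; apply: (big_ind S) => //; [apply: sr0 | apply: srD]. Qed.

Lemma sr_horner (q : {poly algC}) x : (forall i, S q`_i) -> S x -> S q.[x].
Proof. by move=> Sq Sx; rewrite horner_coef; apply: sr_sum => i; apply/srM/srX. Qed.

(* An algebraic x != 0 is a root of a rational polynomial with nonzero
   constant term, which expresses x^-1 as a polynomial in x. *)
Lemma srV x : S x -> x != 0 -> S x^-1.
Proof.
move=> Sx nz_x; have [pQ [minCx monic_pQ] _] := minCpolyP x.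
have [m [q /implyP/(_ (monic_neq0 monic_pQ)) nroot_q0 epQ]] := multiplicity_XsubC pQ 0.
have q0 : (ratr q`_0 : algC) != 0 by rewrite fmorph_eq0 -horner_coef0.
have : (map_poly ratr q).[x] = 0 :> algC.
  have /eqP := root_minCpoly x.
  rewrite minCx epQ rmorphM rmorphXn /= map_polyXsubC rmorph0 subr0 hornerM hornerXn.
  by move/eqP; rewrite mulf_eq0 expf_eq0 (negbTE nz_x) andbF orbF => /eqP.
case sz_q: (size q) => [|n]; first by move: q0; rewrite nth_default ?sz_q // rmorph0 eqxx.
rewrite horner_coef size_map_poly sz_q big_ord_recl coef_map expr0 mulr1 /=.
under eq_bigr do rewrite coef_map exprSr mulrA.
rewrite -mulr_suml addrC => /(canRL (addrK _)); rewrite sub0r.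
set y := \sum_(i < n) _ => ex.
have -> : x^-1 = - y / ratr q`_0.
  by apply: (mulfI nz_x); rewrite mulfV // mulrA mulrN [x * y]mulrC ex opprK mulfV.
rewrite -fmorphV; apply/srM/sr_rat; apply/srN/sr_sum => i.
by apply/srM/srX => //; apply: sr_rat.
Qed.
End SubringQ.

(** * Adjunction and the fields Q_oo(a_1, ..., a_k) *)

Lemma adj_polyE (R : subsetC) a x : R 0 ->
  adj R a x <-> exists2 q : {poly algC}, (forall i, R q`_i) & x = q.[a].
Proof.
move=> R0; split=> [[c Rc ->]|[q Rq ->]]; last by exists q; rewrite // horner_coef.
exists (Poly c) => [i|].
  by rewrite coef_Poly; case: (ltnP i (size c)) => [/Rc|/(nth_default 0) ->].
by rewrite (horner_coef_wide _ (size_Poly c)); apply: eq_bigr => i _; rewrite coef_Poly.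
Qed.

Section Adjunction.
Variables (R : subsetC) (a : algC).
Hypothesis hR : subringQ R.

Lemma adj_sub x : R x -> adj R a x.
Proof.
move=> Rx; apply/adj_polyE; first exact: sr0.
by exists x%:P; rewrite ?hornerC // => i; rewrite coefC; case: eqP => _; [|apply: sr0].
Qed.

Lemma adj_gen : adj R a a.
Proof.
apply/adj_polyE; first exact: sr0.
by exists 'X; rewrite ?hornerX // => i; rewrite coefX; apply: sr_nat.
Qed.

Lemma adj_subring : subringQ (adj R a).
Proof.
have R0 := sr0 hR; split=> [q|x y|x|x y]; first by apply: adj_sub; apply: sr_rat.
- move=> /(adj_polyE _ _ R0)[q Rq ->] /(adj_polyE _ _ R0)[q' Rq' ->].
  by apply/adj_polyE => //; exists (q + q') => [i|]; rewrite ?hornerD // coefD; apply: srD.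
- move=> /(adj_polyE _ _ R0)[q Rq ->].
  by apply/adj_polyE => //; exists (- q) => [i|]; rewrite ?hornerN // coefN; apply: srN.
- move=> /(adj_polyE _ _ R0)[q Rq ->] /(adj_polyE _ _ R0)[q' Rq' ->].
  apply/adj_polyE => //; exists (q * q') => [i|]; rewrite ?hornerM // coefM.
  by apply: sr_sum => // j; apply: (srM hR).
Qed.

Lemma adj_min (T : subsetC) : subringQ T -> (forall x, R x -> T x) -> T a ->
  forall x, adj R a x -> T x.
Proof.
move=> hT RT Ta x /(adj_polyE _ _ (sr0 hR))[q Rq ->].
by apply: sr_horner => // i; apply/RT.
Qed.
End Adjunction.

Lemma adj_mono (R R' : subsetC) a x : (forall y, R y -> R' y) -> adj R a x -> adj R' a x.
Proof. by move=> RR' [c Rc ->]; exists c => // i /Rc/RR'. Qed.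

Lemma Qbase_subring : subringQ Qbase.
Proof.
split=> [q|_ _ [q ->] [q' ->]|_ [q ->]|_ _ [q ->] [q' ->]]; first by exists q.
- by exists (q + q'); rewrite rmorphD.
- by exists (- q); rewrite rmorphN.
- by exists (q * q'); rewrite rmorphM.
Qed.

Lemma Qbase_sub (S : subsetC) x : subringQ S -> Qbase x -> S x.
Proof. by move=> hS [q ->]; apply: sr_rat. Qed.

Lemma Qadj_subring s : subringQ (Qadj s).
Proof. by elim: s => [|a s IH] /=; [apply: Qbase_subring | apply: adj_subring]. Qed.

Lemma sr_expr_plus_inv (S : subsetC) z : subringQ S -> z != 0 -> S (z + z^-1) ->
  forall k, S (z ^+ k + z ^- k).
Proof.
move=> hS nz_z Sz.
have rec k : z ^+ k.+2 + z ^- k.+2 =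
    (z + z^-1) * (z ^+ k.+1 + z ^- k.+1) - (z ^+ k + z ^- k).
  by rewrite -!exprVn !exprS; field.
suff Sk k : S (z ^+ k + z ^- k) /\ S (z ^+ k.+1 + z ^- k.+1) by move=> k; case: (Sk k).
elim: k => [|k [IH1 IH2]].
  by rewrite !expr0 invr1 expr1; split=> //; apply: (srD hS (sr1 hS) (sr1 hS)).
by split=> //; rewrite rec; apply: (srB hS (srM hS Sz IH2) IH1).
Qed.

Definition Qlevel (s : seq algC) (z : algC) : subsetC := adj (Qadj s) (z + z^-1).

Lemma Qlevel_subring s z : subringQ (Qlevel s z).
Proof. exact/adj_subring/Qadj_subring. Qed.

Lemma prim_root2_neq0 n (z : algC) : (2 ^ n.+2)%N.-primitive_root z -> z != 0.
Proof. by move=> prim_z; rewrite (prim_root_eq0 prim_z) expn_eq0. Qed.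

Lemma prim_root2_exists n : {z : algC | (2 ^ n.+2)%N.-primitive_root z}.
Proof. by apply: C_prim_root_exists; rewrite expn_gt0. Qed.

(* z is a power of w, and z^k + z^-k is a polynomial in w + w^-1 *)
Lemma Qlevel_mono s n m (z w : algC) : (n <= m)%N ->
  (2 ^ n.+2)%N.-primitive_root z -> (2 ^ m.+2)%N.-primitive_root w ->
  forall x, Qlevel s z x -> Qlevel s w x.
Proof.
move=> le_nm prim_z prim_w; have hQs := Qadj_subring s.
apply: (adj_min hQs) => [|x Qx|]; [exact: Qlevel_subring | exact: adj_sub |].
have : z ^+ (2 ^ m.+2)%N = 1.
  by rewrite -(subnKC le_nm) -!addSn expnD exprM (prim_expr_order prim_z) expr1n.
case/(prim_rootP prim_w)=> i ->; apply: sr_expr_plus_inv; first exact: Qlevel_subring.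
  exact: prim_root2_neq0 prim_w.
exact: adj_gen.
Qed.

Lemma Qinf_adj_level2 s x y : Qinf_adj s x -> Qinf_adj s y ->
  exists n, exists2 w, (2 ^ n.+2)%N.-primitive_root w & Qlevel s w x /\ Qlevel s w y.
Proof.
move=> [n1 [z1 prim_z1 Qx]] [n2 [z2 prim_z2 Qy]]; exists (maxn n1 n2).
have [w prim_w] := prim_root2_exists (maxn n1 n2); exists w => //.
by split; [apply: (Qlevel_mono (leq_maxl n1 n2) prim_z1) |
           apply: (Qlevel_mono (leq_maxr n1 n2) prim_z2)].
Qed.

Lemma Qinf_adj_field s : fieldQ (Qinf_adj s).
Proof.
have [w prim_w] := prim_root2_exists 0.
split; first split.
- by move=> q; exists 0%N, w => //; apply: (sr_rat (Qlevel_subring s w)).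
- move=> x y Qx Qy; have [n [z prim_z [{}Qx {}Qy]]] := Qinf_adj_level2 Qx Qy.
  by exists n, z => //; apply: (srD (Qlevel_subring s z)).
- by move=> x [n [z prim_z Qx]]; exists n, z => //; apply: (srN (Qlevel_subring s z)).
- move=> x y Qx Qy; have [n [z prim_z [{}Qx {}Qy]]] := Qinf_adj_level2 Qx Qy.
  by exists n, z => //; apply: (srM (Qlevel_subring s z)).
by move=> x [n [z prim_z Qx]] nz_x; exists n, z => //; apply: (srV (Qlevel_subring s z)).
Qed.

Lemma Qinf_adj_cos s n (z : algC) : (2 ^ n.+2)%N.-primitive_root z -> Qinf_adj s (z + z^-1).
Proof. by move=> prim_z; exists n, z => //; apply/adj_gen/Qadj_subring. Qed.

Lemma Qinf_adj_catl s0 s x : Qinf_adj s0 x -> Qinf_adj (s ++ s0) x.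
Proof.
move=> [n [z prim_z Qx]]; exists n, z => //; apply: adj_mono Qx => {}x.
by elim: s => [|a s IH] //= /IH; apply/adj_sub/Qadj_subring.
Qed.

Definition quad (K : subsetC) (al : algC) : subsetC :=
  fun x => exists u v, [/\ K u, K v & x = u + v * al].

Section QuadSubring.
Variables (K : subsetC) (al : algC).
Hypothesis hK : subringQ K.

Lemma quad_sub x : K x -> quad K al x.
Proof. by move=> Kx; exists x, 0; split; rewrite ?mul0r ?addr0 //; apply: sr0. Qed.

Lemma quad_gen : quad K al al.
Proof. by exists 0, 1; split; rewrite ?add0r ?mul1r //; [apply: sr0 | apply: sr1]. Qed.

Lemma quad_subring : K (al ^+ 2) -> subringQ (quad K al).
Proof.
move=> Kal2; split=> [q|_ _ [u [v [Ku Kv ->]]] [u' [v' [Ku' Kv' ->]]]|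
                      _ [u [v [Ku Kv ->]]]|_ _ [u [v [Ku Kv ->]]] [u' [v' [Ku' Kv' ->]]]].
- exact/quad_sub/(sr_rat hK).
- by exists (u + u'), (v + v'); split; [apply: (srD hK) | apply: (srD hK) | ring].
- by exists (- u), (- v); split; [apply: (srN hK) | apply: (srN hK) | ring].
- exists (u * u' + v * v' * al ^+ 2), (u * v' + v * u'); split; last by ring.
    by apply: (srD hK (srM hK Ku Ku')); apply: (srM hK (srM hK Kv Kv') Kal2).
  by apply: (srD hK); apply: (srM hK).
Qed.

Lemma quad_id : K al -> quad K al = K.
Proof.
move=> Kal; apply/functional_extensionality => x; apply/propositional_extensionality.
by split=> [[u [v [Ku Kv ->]]]|/quad_sub //]; apply: (srD hK Ku (srM hK Kv Kal)).
Qed.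
End QuadSubring.

Lemma Qlevel_cons s z al x : Qbase (al ^+ 2) ->
  Qlevel (al :: s) z x <-> quad (Qlevel s z) al x.
Proof.
move=> Qal2; have hQs := Qadj_subring s; have hQal := adj_subring al hQs.
have hL := Qlevel_subring s z; have hLal : subringQ (quad (Qlevel s z) al).
  by apply: quad_subring => //; apply: Qbase_sub.
split.
- apply: (adj_min hQal hLal) => [y|]; last exact/(quad_sub _ hL)/(adj_gen _ hQs).
  apply: (adj_min hQs hLal) => [w Qw|]; last exact: quad_gen.
  exact/(quad_sub _ hL)/(adj_sub _ hQs).
- have sub y : Qlevel s z y -> Qlevel (al :: s) z y by apply: adj_mono => w /adj_sub; apply.
  move=> [u [v [Lu Lv ->]]]; have hL' := Qlevel_subring (al :: s) z.
  by apply: (srD hL' (sub _ Lu)); apply: (srM hL' (sub _ Lv)); apply/adj_sub/adj_gen.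
Qed.

Lemma Qinf_adj_cons s al : Qbase (al ^+ 2) -> Qinf_adj (al :: s) = quad (Qinf_adj s) al.
Proof.
move=> Qal2; apply/functional_extensionality => x; apply/propositional_extensionality.
split=> [[n [z prim_z /(Qlevel_cons _ _ _ Qal2) [u [v [Lu Lv ->]]]]]|[u [v [Ku Kv ->]]]].
  by exists u, v; split=> //; exists n, z.
have [n [z prim_z [Lu Lv]]] := Qinf_adj_level2 Ku Kv.
by exists n, z => //; apply/(Qlevel_cons _ _ _ Qal2); exists u, v.
Qed.

(** * Squares in finite fields *)

Section FiniteFieldSquares.
Variable F : finFieldType.

Let squares := [set y ^+ 2 | y in [set: F]].

(* y |-> (y^2, whether y is the chosen square root of y^2) is injective *)
Lemma card_squares_ge : (#|F| <= #|squares| * 2)%N.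
Proof.
pose rt (s : F) := odflt 0 [pick z | z ^+ 2 == s].
have rtK y : rt (y ^+ 2) ^+ 2 = y ^+ 2.
  by rewrite /rt; case: pickP => [z /eqP //|/(_ y)]; rewrite eqxx.
pose g y := (y ^+ 2, y == rt (y ^+ 2)).
have inj_g : injective g.
  move=> y z [yz2]; rewrite -yz2; set r := rt _.
  have [<- /esym/eqP //|ne_yr /esym/negbT ne_zr] := eqVneq y r.
  have r_opp t : t ^+ 2 = y ^+ 2 -> t != r -> r = - t.
    move=> t2 ne_tr; move/eqP: (rtK y); rewrite -/r -t2 eqf_sqr eq_sym (negbTE ne_tr).
    by move=> /eqP.
  by apply: oppr_inj; rewrite -(r_opp y) // -(r_opp z).
have -> : #|F| = #|g @: [set: F]| by rewrite card_imset // cardsT.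
rewrite -card_bool -cardsT -cardsX; apply/subset_leq_card/subsetP => _ /imsetP[y _ ->].
by rewrite in_setX in_setT andbT; apply/imsetP; exists y; rewrite ?in_setT.
Qed.

(* A nonsquare N times the squares and the squares overlap only in 0, and
   together they would miss a only if #|F| were even. *)
Lemma nonsquare_mul_square (N a : F) : odd #|F| ->
  (forall y, y ^+ 2 != N) -> (forall y, y ^+ 2 != a) -> exists c, a = N * c ^+ 2.
Proof.
move=> odd_F nsqN nsqa.
have nz_N : N != 0 by have := nsqN 0; rewrite expr0n /= eq_sym.
pose Nsquares := [set N * s | s in squares].
have card_N : #|Nsquares| = #|squares| by rewrite card_imset //; apply: mulfI.
have card_I : (#|squares :&: Nsquares| <= 1)%N.
  rewrite -(cards1 (0 : F)); apply/subset_leq_card/subsetP=> x.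
  rewrite in_setI => /andP[/imsetP[y _ ->] /imsetP[_ /imsetP[z _ ->] yz]].
  rewrite in_set1; have [z0 | nz_z] := eqVneq z 0; first by rewrite yz z0 expr0n mulr0.
  by have /negP[] := nsqN (y / z); rewrite expr_div_n yz mulfK // expf_neq0.
have notSa : a \notin squares by apply/imsetP=> -[y _ /eqP]; rewrite eq_sym (negbTE (nsqa y)).
suff /imsetP[_ /imsetP[c _ ->] ->] : a \in Nsquares by exists c.
apply/negPn/negP=> notNa.
have : (#|squares :|: Nsquares| <= #|[set~ a]|)%N.
  apply/subset_leq_card/subsetP=> x; rewrite in_setU in_setC1.
  by apply: contraL => /eqP ->; rewrite negb_or notSa.
rewrite cardsC1 => card_U; have := cardsUI squares Nsquares; have := card_squares_ge.
move: odd_F card_U card_I; rewrite card_N.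
move: #|F| #|squares| #|squares :|: Nsquares| #|squares :&: Nsquares| => n s u i.
lia.
Qed.
End FiniteFieldSquares.

Section SquareMinusTwo.
Variable F : finFieldType.
Hypothesis two_neq0 : (2%:R : F) != 0.
Let f (x : F) := x ^+ 2 - 2%:R.

Lemma iter_sqr_sub2_0_neq0 t : iter t.+1 f 0 != 0.
Proof.
have : iter t.+1 f 0 = - 2%:R \/ iter t.+1 f 0 = 2%:R.
  elim: t => [|t [IH|IH]]; rewrite iterS ?IH /f; first (by left; rewrite expr0n sub0r);
    by right; rewrite ?sqrrN; ring.
by case=> ->; rewrite ?oppr_eq0.
Qed.

(* An orbit of x |-> x^2 - 2 that reaches 0 is injective until then, since
   the orbit of 0 never returns to 0. *)
Lemma sqr_sub2_orbit_neq0 n (X : nat -> F) : (#|F| <= n)%N ->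
  (forall j, (j < n)%N -> X j.+1 = f (X j)) -> X n != 0.
Proof.
move=> card_F Xf; apply/eqP=> Xn0.
have Xit i t : (i + t <= n)%N -> X (i + t)%N = iter t f (X i).
  by elim: t => [|t IH] le_n; rewrite ?addn0 // addnS /= Xf ?IH //; lia.
have inj_X : injective (fun i : 'I_n.+1 => X i).
  move=> i k; wlog le_ik : i k / (i <= k)%N.
    by move=> W eq_X; case/orP: (leq_total i k) => h; [apply: W | apply/esym/W].
  move=> /= eq_X; apply/val_inj/eqP; rewrite eqn_leq le_ik /= leqNgt.
  apply/negP=> lt_ik; have le_kn : (k <= n)%N by rewrite -ltnS.
  have X0 : X (i + (n - k))%N = 0 by rewrite Xit ?eq_X -?Xit ?subnKC //; lia.
  have := iter_sqr_sub2_0_neq0 (k - i).-1; rewrite -{1}X0 -Xit; last by lia.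
  have -> : (i + (n - k) + (k - i).-1.+1 = n)%N by lia.
  by rewrite Xn0 eqxx.
by have := leq_card _ inj_X; rewrite card_ord ltnNge card_F.
Qed.
End SquareMinusTwo.

Lemma Fp_intr_eq0 p (m : int) : prime p -> ((m%:~R : 'F_p) == 0) = (p %| `|m|)%N.
Proof.
move=> p_pr; have Fp_nat_eq0 n : ((n%:R : 'F_p) == 0) = (p %| n)%N.
  by rewrite -val_eqE /= val_Fp_nat.
by case: m => n; rewrite ?NegzE ?mulrNz ?oppr_eq0 Fp_nat_eq0.
Qed.

Lemma odd_prime_ndvd2 p : prime p -> odd p -> ~~ (p %| 2)%N.
Proof.
move=> p_pr p_odd; apply/negP=> /(dvdn_leq (isT : (0 < 2)%N)).
by move: p_pr p_odd; case: p => [|[|[|]]].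
Qed.

Lemma Fp_two_neq0 p : prime p -> odd p -> (2%:R : 'F_p) != 0.
Proof. by move=> p_pr p_odd; rewrite -[2%:R]/((2%:Z)%:~R) Fp_intr_eq0 // odd_prime_ndvd2. Qed.

(** * Primes above p *)

Section IntegersOf.
Variable K : subsetC.
Hypothesis hK : subringQ K.

Lemma intsD x y : ints K x -> ints K y -> ints K (x + y).
Proof. by move=> [? ?] [? ?]; split; [apply: srD | apply: rpredD]. Qed.
Lemma intsN x : ints K x -> ints K (- x).
Proof. by move=> [? ?]; split; [apply: srN | rewrite rpredN]. Qed.
Lemma intsB x y : ints K x -> ints K y -> ints K (x - y).
Proof. by move=> ? ?; apply/intsD/intsN. Qed.
Lemma intsM x y : ints K x -> ints K y -> ints K (x * y).
Proof. by move=> [? ?] [? ?]; split; [apply: srM | apply: rpredM]. Qed.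
Lemma ints_int (m : int) : ints K m%:~R.
Proof. by split; [apply: sr_int | apply: Aint_int]. Qed.
Lemma ints_nat n : ints K n%:R.
Proof. exact: (ints_int n). Qed.
Lemma intsX x n : ints K x -> ints K (x ^+ n).
Proof. by move=> [? ?]; split; [apply: srX | apply: rpredX]. Qed.
End IntegersOf.

Section PrimeAbove.
Variables (K : subsetC) (p : nat) (P : subsetC).
Hypotheses (hK : subringQ K) (p_pr : prime p) (hP : prime_above K p P).

Lemma prime_above_ints x : P x -> ints K x. Proof. by case: hP => h *; apply: h. Qed.
Lemma prime_above0 : P 0. Proof. by case: hP. Qed.
Lemma prime_aboveB x y : P x -> P y -> P (x - y). Proof. by case: hP => _ _ h *; apply: h. Qed.
Lemma prime_aboveMl a x : ints K a -> P x -> P (a * x).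
Proof. by case: hP => _ _ _ h *; apply: h. Qed.
Lemma prime_aboveMr a x : P x -> ints K a -> P (x * a).
Proof. by rewrite mulrC => *; apply: prime_aboveMl. Qed.
Lemma prime_above_neq1 : ~ P 1. Proof. by case: hP => _ _ _ _ []. Qed.
Lemma prime_above_mul x y : ints K x -> ints K y -> P (x * y) -> P x \/ P y.
Proof. by case: hP => _ _ _ _ [_ h _]; apply: h. Qed.
Lemma prime_above_char : P p%:R. Proof. by case: hP => _ _ _ _ []. Qed.
Lemma prime_aboveN x : P x -> P (- x).
Proof. by rewrite -sub0r; apply/prime_aboveB/prime_above0. Qed.
Lemma prime_aboveD x y : P x -> P y -> P (x + y).
Proof. by move=> Px Py; rewrite -[y]opprK; apply/prime_aboveB/prime_aboveN. Qed.

(* Bezout: if p does not divide m then 1 = u p + v m would lie in P. *)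
Lemma prime_above_int (m : int) : P m%:~R <-> (p %| `|m|)%N.
Proof.
split=> [Pm|/dvdnP[k def_m]]; last first.
  have -> : m%:~R = (sgz m * k%:Z)%:~R * p%:R :> algC.
    by rewrite -[p%:R]/((p%:Z)%:~R) -intrM -mulrA -PoszM -def_m -intEsg.
  by apply/prime_aboveMl/prime_above_char; apply: ints_int.
apply/negPn/negP=> ndvd_pm; apply: prime_above_neq1.
have [u [v def1]] := Bezoutz p m.
have -> : (1 : algC) = u%:~R * p%:R + v%:~R * m%:~R.
  rewrite -[p%:R]/((p%:Z)%:~R) -!intrM -intrD def1.
  by rewrite /gcdz /= (eqP (_ : coprime p `|m|)) // prime_coprime.
by apply: prime_aboveD; apply: prime_aboveMl => //;
  [apply: ints_int | apply: prime_above_char | apply: ints_int].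
Qed.

Lemma prime_above_congr (m n : int) : P (m%:~R - n%:~R) <-> (m%:~R : 'F_p) = n%:~R.
Proof.
rewrite -intrB prime_above_int -(Fp_intr_eq0 _ p_pr) rmorphB /= subr_eq0.
by split=> /eqP.
Qed.

Lemma prime_above_nat_sqr (y : 'F_p) (m : int) :
  y ^+ 2 = m%:~R -> P ((nat_of_ord y)%:R ^+ 2 - m%:~R).
Proof.
move=> y2; rewrite -natrX pmulrn prime_above_congr.
by rewrite -pmulrn natrX natr_Zp.
Qed.
End PrimeAbove.

Lemma exists_switch (G : nat -> Prop) a b : (a <= b)%N -> ~ G a -> G b ->
  exists j, ~ G j /\ G j.+1.
Proof.
elim: b => [|b IH] le_ab nGa Gb.
  by move: le_ab; rewrite leqn0 => /eqP a0; rewrite a0 in nGa.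
have [Gb'|nGb] := classic (G b); last by exists b.
move: le_ab; rewrite leq_eqVlt => /orP[/eqP a_eq|]; first by rewrite a_eq in nGa.
by rewrite ltnS => le_ab; apply: IH.
Qed.

Section SquaresModPrime.
Variables (K : subsetC) (p : nat) (P : subsetC).
Hypotheses (hK : subringQ K) (p_pr : prime p) (p_odd : odd p) (hP : prime_above K p P).
Hypothesis K_cos : forall n z, (2 ^ n.+2)%N.-primitive_root z -> K (z + z^-1).

Let zeta := sval (prim_root2_exists p).
Let prim_zeta : (2 ^ p.+2)%N.-primitive_root zeta := svalP (prim_root2_exists p).
Let e j := zeta ^+ (2 ^ j) + (zeta ^+ (2 ^ j))^-1.

Let e_succ j : e j.+1 = e j ^+ 2 - 2%:R.
Proof.
have : zeta ^+ (2 ^ j) != 0 by apply/expf_neq0/(prim_root2_neq0 prim_zeta).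
rewrite /e expnSr exprM.
by move: (zeta ^+ _) => u nz_u; rewrite -exprVn; field.
Qed.

Let e_p : e p = 0.
Proof.
rewrite /e; set u := zeta ^+ (2 ^ p).
have u2 : u ^+ 2 = -1.
  have : (u ^+ 2) ^+ 2 == 1 ^+ 2 by rewrite -!exprM mulnA -!expnSr prim_expr_order ?expr1n.
  rewrite eqf_sqr -exprM -expnSr -(prim_order_dvd prim_zeta) dvdn_Pexp2l // ltnn /=.
  by move/eqP.
have nz_u : u != 0 by apply/expf_neq0/(prim_root2_neq0 prim_zeta).
suff -> : u^-1 = - u by rewrite addrN.
by apply: (mulfI nz_u); rewrite mulfV // mulrN -expr2 u2 opprK.
Qed.

Let e_ints j : ints K (e j).
Proof.
elim: j => [|j IH]; last by rewrite e_succ; apply/(intsB hK)/(ints_nat hK)/(intsX hK).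
rewrite /e expn0 expr1; split; first exact: K_cos prim_zeta.
apply/rpredD/(Aint_unity_root (expn_gt0 2 p.+2)); first exact: Aint_prim_root prim_zeta.
by rewrite unity_rootE exprVn prim_expr_order // invr1.
Qed.

Let e_congr_int j := exists m : int, P (e j - m%:~R).

Let e_congr_int_p : e_congr_int p.
Proof. by exists 0; rewrite e_p subrr; apply: prime_above0 hP. Qed.

(* Otherwise the residues of e 0, ..., e p would be an orbit of x |-> x^2 - 2
   in F_p of length p + 1 ending at 0. *)
Let not_all_e_congr_int : ~ (forall j, (j <= p)%N -> e_congr_int j).
Proof.
move=> all_e_congr_int.
have /fin_all_exists[m Pm] : forall j : 'I_p.+1, e_congr_int j.
  by move=> j; apply: all_e_congr_int; rewrite -ltnS.
pose X j : 'F_p := (m (inord j))%:~R.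
have Pe j : (j <= p)%N -> P (e j - (m (inord j))%:~R).
  by rewrite -ltnS => lt_jp; have := Pm (inord j); rewrite inordK.
have Xsucc j : (j < p)%N -> X j.+1 = X j ^+ 2 - 2%:R.
  move=> lt_jp; have -> : X j ^+ 2 - 2%:R = (m (inord j) * m (inord j) - 2%:Z)%:~R.
    by rewrite /X rmorphB rmorphM /= expr2.
  apply/(prime_above_congr hK p_pr hP).
  have -> : (m (inord j.+1))%:~R - (m (inord j) * m (inord j) - 2%:Z)%:~R =
     (e j - (m (inord j))%:~R) * (e j + (m (inord j))%:~R) -
     (e j.+1 - (m (inord j.+1))%:~R) :> algC.
    by rewrite e_succ rmorphB rmorphM /=; ring.
  apply/(prime_aboveB hP)/Pe/lt_jp; apply/(prime_aboveMr hP); first exact/Pe/ltnW.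
  exact/(intsD hK)/(ints_int hK)/e_ints.
have Xp : X p = 0.
  apply/eqP; rewrite /X Fp_intr_eq0 // -(prime_above_int hK p_pr hP).
  by have := Pe p (leqnn p); rewrite e_p sub0r => /(prime_aboveN hP); rewrite opprK.
have card_p : (#|'F_p| <= p)%N by rewrite card_Fp.
by have /eqP[] := sqr_sub2_orbit_neq0 (Fp_two_neq0 p_pr p_odd) card_p Xsucc.
Qed.

(* With e j not congruent to an integer but e j.+1 = e j ^+ 2 - 2 congruent
   to m, the integer m + 2 is congruent to a square but is not a square mod p. *)
Let exists_nonsquare_mod : exists gam (N : int),
  [/\ ints K gam, P (gam ^+ 2 - N%:~R) & forall y : 'F_p, y ^+ 2 != N%:~R].
Proof.
have [j0 [le_j0p n_int_j0]] : exists j0, (j0 <= p)%N /\ ~ e_congr_int j0.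
  apply: NNPP => none; apply: not_all_e_congr_int => j le_jp.
  by apply: NNPP => nj; apply: none; exists j.
have [j [nj [m Pm]]] := exists_switch le_j0p n_int_j0 e_congr_int_p.
have PN : P (e j ^+ 2 - (m + 2)%:~R).
  by rewrite (_ : _ - _ = e j.+1 - m%:~R) // e_succ rmorphD /=; ring.
exists (e j), (m + 2); split; [exact: e_ints | exact: PN | move=> y].
apply/eqP=> y2; apply: nj.
have : P ((e j - y%:R) * (e j + y%:R)).
  rewrite -subr_sqr (_ : _ - _ = (e j ^+ 2 - (m + 2)%:~R) - (y%:R ^+ 2 - (m + 2)%:~R));
    last by ring.
  exact/(prime_aboveB hP)/(prime_above_nat_sqr hK p_pr hP).
have ints_y : ints K y%:R := ints_nat hK y.
case/(prime_above_mul hP) => [||Py|Py]; [exact/(intsB hK)/ints_y/e_ints |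
  exact/(intsD hK)/ints_y/e_ints | by exists y |].
by exists (- y%:Z); rewrite mulrNz opprK.
Qed.

(* A nonsquare a mod p is N times a square mod p, and N is a square mod P. *)
Lemma square_mod_prime_above (a : int) : ~~ (p %| `|a|)%N ->
  exists2 b, ints K b & P (b ^+ 2 - a%:~R).
Proof.
move=> ndvd_pa.
have [[y y2]|nsq_a] := classic (exists y : 'F_p, y ^+ 2 = a%:~R).
  by exists y%:R; [apply: ints_nat | apply: (prime_above_nat_sqr hK p_pr hP)].
have [gam [N [ints_gam PN nsq_N]]] := exists_nonsquare_mod.
have nsq_a' y : y ^+ 2 != a%:~R :> 'F_p by apply/eqP=> y2; apply: nsq_a; exists y.
have odd_Fp : odd #|'F_p| by rewrite card_Fp.
have [c ac] := nonsquare_mul_square odd_Fp nsq_N nsq_a'.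
have ints_c : ints K c%:R := ints_nat hK c.
exists (c%:R * gam); first exact: intsM.
have -> : (c%:R * gam) ^+ 2 - a%:~R = c%:R ^+ 2 * (gam ^+ 2 - N%:~R) +
    ((N * (c * c)%N%:Z)%:~R - a%:~R) :> algC.
  by rewrite rmorphM /= -pmulrn natrM; ring.
apply/(prime_aboveD hP); first exact/(prime_aboveMl hP)/PN/intsX.
by apply/(prime_above_congr hK p_pr hP); rewrite ac rmorphM /= -pmulrn natrM natr_Zp expr2.
Qed.
End SquaresModPrime.

(** * Splitting in a quadratic extension *)

Section QuadraticExtension.
Variables (K : subsetC) (al : algC) (a : int).
Hypotheses (hKf : fieldQ K) (al2 : al ^+ 2 = a%:~R) (K'al : ~ K al).

Let hK : subringQ K := hKf.1.
Let L := quad K al.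
Let Ka : K a%:~R := sr_int hK a.

Let hL : subringQ L.
Proof. by apply: quad_subring; rewrite // al2. Qed.

Lemma quad_coord_uniq u v u' v' : K u -> K v -> K u' -> K v' ->
  u + v * al = u' + v' * al -> u = u' /\ v = v'.
Proof.
move=> Ku Kv Ku' Kv' eq_uv; have [eq_v|ne_vv'] := eqVneq v v'.
  by rewrite -eq_v in eq_uv *; split=> //; apply: (addIr (v * al)).
have nz_v : v - v' != 0 by rewrite subr_eq0.
case: K'al; have -> : al = (u' - u) / (v - v').
  apply: (mulIf nz_v); rewrite mulfVK //.
  by transitivity ((u + v * al) - (u' + v' * al) + (u' - u)); [ring | rewrite eq_uv subrr add0r].
by apply: (srM hK); [apply: (srB hK) | apply: hKf.2 => //; apply: (srB hK)].
Qed.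

Lemma quad_coord_eq0 u v : K u -> K v -> u + v * al = 0 -> u = 0 /\ v = 0.
Proof.
move=> Ku Kv uv0; apply: quad_coord_uniq; rewrite ?uv0 ?mul0r ?addr0 //; exact: sr0.
Qed.

Lemma horner_quad_conj u v (q : {poly algC}) : K u -> K v -> (forall i, K q`_i) ->
  exists A B, [/\ K A, K B, q.[u + v * al] = A + B * al & q.[u - v * al] = A - B * al].
Proof.
move=> Ku Kv; elim/poly_ind: q => [_|q c IH Kq].
  by exists 0, 0; rewrite !horner0 mul0r addr0 subr0; split=> //; apply: sr0.
have Kc : K c by have := Kq 0%N; rewrite coefD coefMX coefC /= add0r.
have [|A [B [KA KB eA eB]]] := IH.
  by move=> i; have := Kq i.+1; rewrite coefD coefMX coefC /= addr0.
exists (A * u + B * v * a%:~R + c), (A * v + B * u).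
rewrite !hornerD !hornerMX !hornerC eA eB; split; try by rewrite -al2; ring.
  exact (srD hK (srD hK (srM hK KA Ku) (srM hK (srM hK KB Kv) Ka)) Kc).
exact (srD hK (srM hK KA Kv) (srM hK KB Ku)).
Qed.

Lemma quad_conj_Aint u v : K u -> K v -> u + v * al \in Aint -> u - v * al \in Aint.
Proof.
move=> Ku Kv x_Aint; pose q := minCpoly (u + v * al).
have Kq i : K q`_i.
  by have /polyOverP/(_ i)/intrP[m ->] : q \is a polyOver Num.int := x_Aint; apply: sr_int.
have [A [B [KA KB qx qx']]] := horner_quad_conj Ku Kv Kq.
have [A0 B0] : A = 0 /\ B = 0 by apply: quad_coord_eq0; rewrite // -qx; apply/eqP/root_minCpoly.
apply: (root_monic_Aint (p := q)) => //; last exact: (minCpoly_monic (u + v * al)).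
by rewrite /root qx' A0 B0 mul0r subr0.
Qed.

Lemma quad_gen_Aint : al \in Aint.
Proof.
apply: (root_monic_Aint (p := 'X^2 - (a%:~R)%:P)); first by rewrite /root !hornerE al2 subrr.
  exact: monicXnsubC.
by rewrite polyOverXnsubC intr_int.
Qed.

Let D : algC := 2%:R * a%:~R.

Let ints_D : ints K D := intsM hK (ints_nat hK 2) (ints_int hK a).

Lemma ints_quad_sub x : ints K x -> ints L x.
Proof. by case=> Kx x_Aint; split=> //; apply: quad_sub. Qed.

Lemma ints_quad_gen : ints L al.
Proof. by split; [apply: (quad_gen al hK) | apply: quad_gen_Aint]. Qed.

(* The coordinates of an integer of L have denominators dividing 2a:
   2u = x + x', 2v al = x - x' with x' the conjugate of x. *)
Lemma ints_quad_coord x u v : ints L x -> K u -> K v -> x = u + v * al ->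
  ints K (D * u) /\ ints K (D * v).
Proof.
move=> [_ x_Aint] Ku Kv def_x; rewrite def_x in x_Aint.
have x'_Aint := quad_conj_Aint Ku Kv x_Aint; have KD := ints_D.1.
split; split; [exact: (srM hK) | | exact: (srM hK) |].
  have -> : D * u = a%:~R * ((u + v * al) + (u - v * al)) by rewrite /D; ring.
  by apply: rpredM; [apply: Aint_int | apply: rpredD].
have -> : D * v = ((u + v * al) - (u - v * al)) * al by rewrite /D -al2; ring.
by apply: rpredM; [apply: rpredB | apply: quad_gen_Aint].
Qed.

Variables (p : nat) (P : subsetC).
Hypotheses (p_pr : prime p) (p_odd : odd p) (ndvd_pa : ~~ (p %| `|a|)%N).
Hypothesis hP : prime_above K p P.

Let D_notin : ~ P D.
Proof.
rewrite /D -[2%:R]/((2%:Z)%:~R) -intrM (prime_above_int hK p_pr hP) abszM Euclid_dvdM //.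
by rewrite (negbTE ndvd_pa) orbF (negbTE (odd_prime_ndvd2 p_pr p_odd)).
Qed.

Section SplitPrime.
Variable b : algC.
Hypotheses (ints_b : ints K b) (Pb : P (b ^+ 2 - a%:~R)).

(* The prime of L above P induced by u + v al |-> u + v b mod P; the factor D
   makes D u and D v integral. *)
Definition split_eval u v := D * u + D * v * b.

Definition split_prime : subsetC := fun x => ints L x /\
  exists u v, [/\ K u, K v, x = u + v * al & P (split_eval u v)].

Lemma split_primeE x u v : K u -> K v -> x = u + v * al -> ints L x ->
  split_prime x <-> P (split_eval u v).
Proof.
move=> Ku Kv def_x Lx; split=> [[_ [u' [v' [Ku' Kv' def_x' Puv]]]]|]; last first.
  by split=> //; exists u, v.
by have [-> ->] := quad_coord_uniq Ku Kv Ku' Kv' (etrans (esym def_x) def_x').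
Qed.

Lemma ints_split_eval x u v : ints L x -> K u -> K v -> x = u + v * al ->
  ints K (split_eval u v).
Proof.
move=> Lx Ku Kv def_x; have [Du Dv] := ints_quad_coord Lx Ku Kv def_x.
by apply/(intsD hK) => //; apply: (intsM hK).
Qed.

Let quad_mulE u v u' v' : (u + v * al) * (u' + v' * al) =
  (u * u' + a%:~R * v * v') + (u * v' + v * u') * al.
Proof. by rewrite -al2; ring. Qed.

Let K_quad_mul u v u' v' : K u -> K v -> K u' -> K v' ->
  K (u * u' + a%:~R * v * v') /\ K (u * v' + v * u').
Proof.
move=> Ku Kv Ku' Kv'; split; last exact (srD hK (srM hK Ku Kv') (srM hK Kv Ku')).
exact (srD hK (srM hK Ku Ku') (srM hK (srM hK Ka Kv) Kv')).
Qed.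

Let split_evalM x y u v u' v' : ints L x -> ints L y -> K u -> K v -> K u' -> K v' ->
  x = u + v * al -> y = u' + v' * al ->
  P (split_eval (u * u' + a%:~R * v * v') (u * v' + v * u')) <->
  P (split_eval u v * split_eval u' v').
Proof.
move=> Lx Ly Ku Kv Ku' Kv' def_x def_y; have [KU KV] := K_quad_mul Ku Kv Ku' Kv'.
have def_xy := etrans (congr2 *%R def_x def_y) (quad_mulE u v u' v').
have [_ Dv] := ints_quad_coord Lx Ku Kv def_x; have [_ Dv'] := ints_quad_coord Ly Ku' Kv' def_y.
have PE : P ((D * v) * (D * v') * (a%:~R - b ^+ 2)).
  by apply/(prime_aboveMl hP); [apply: (intsM hK) | rewrite -opprB; apply: (prime_aboveN hP)].
have -> : split_eval u v * split_eval u' v' =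
    D * split_eval (u * u' + a%:~R * v * v') (u * v' + v * u') -
    (D * v) * (D * v') * (a%:~R - b ^+ 2) by rewrite /split_eval; ring.
split=> [PUV|]; first by apply/(prime_aboveB hP) => //; apply/(prime_aboveMl hP).
move=> /(prime_aboveD hP)/(_ PE); rewrite subrK.
have LUV := ints_split_eval (intsM hL Lx Ly) KU KV def_xy.
by case/(prime_above_mul hP) => // /D_notin.
Qed.

Let split_primeMl c x : ints L c -> split_prime x -> split_prime (c * x).
Proof.
move=> Lc [Lx [u [v [Ku Kv def_x Puv]]]].
have [u' [v' [Ku' Kv' def_c]]] : quad K al c := Lc.1.
have [KU KV] := K_quad_mul Ku' Kv' Ku Kv.
split; first exact (intsM hL Lc Lx).
exists (u' * u + a%:~R * v' * v), (u' * v + v' * u); split=> //.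
  by rewrite def_c def_x quad_mulE.
apply/(split_evalM Lc Lx Ku' Kv' Ku Kv def_c def_x)/(prime_aboveMl hP) => //.
exact (ints_split_eval Lc Ku' Kv' def_c).
Qed.

Let split_prime_mul x y : ints L x -> ints L y ->
  split_prime (x * y) -> split_prime x \/ split_prime y.
Proof.
move=> Lx Ly [Lxy [U [V [KU KV def_xy PUV]]]].
have [u [v [Ku Kv def_x]]] : quad K al x := Lx.1.
have [u' [v' [Ku' Kv' def_y]]] : quad K al y := Ly.1.
have [KU' KV'] := K_quad_mul Ku Kv Ku' Kv'.
have [eU eV] := quad_coord_uniq KU KV KU' KV'
  (etrans (esym def_xy) (etrans (congr2 *%R def_x def_y) (quad_mulE u v u' v'))).
rewrite eU eV (split_evalM Lx Ly Ku Kv Ku' Kv' def_x def_y) in PUV.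
case/(prime_above_mul hP): PUV => [||Puv|Puv].
- exact (ints_split_eval Lx Ku Kv def_x).
- exact (ints_split_eval Ly Ku' Kv' def_y).
- by left; split=> //; exists u, v.
- by right; split=> //; exists u', v'.
Qed.

Lemma split_prime_above : prime_above L p split_prime.
Proof.
have K0 := sr0 hK; have eval0 u : split_eval u 0 = D * u.
  by rewrite /split_eval !mulr0 mul0r addr0.
have x0 x : x = x + 0 * al by rewrite mul0r addr0.
split=> [x [] //||x y [Lx [u [v [Ku Kv def_x Puv]]]] [Ly [u' [v' [Ku' Kv' def_y Puv']]]]|
         c x Lc /(split_primeMl Lc) //|].
- split; first exact: (ints_int hL 0).
  by exists 0, 0; split; rewrite // ?eval0 ?mulr0 -?x0 //; apply: (prime_above0 hP).
- split; first exact (intsB hL Lx Ly).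
  exists (u - u'), (v - v'); split; [exact: (srB hK) | exact: (srB hK) | |].
    by rewrite def_x def_y; ring.
  have -> : split_eval (u - u') (v - v') = split_eval u v - split_eval u' v'.
    by rewrite /split_eval; ring.
  exact: (prime_aboveB hP).
split=> [[_ [u [v [Ku Kv def1 Puv]]]]||]; [|exact: split_prime_mul|].
  have [u1 v0] := quad_coord_uniq (sr1 hK) K0 Ku Kv (etrans (esym (x0 1)) def1).
  by move: Puv; rewrite -u1 -v0 eval0 mulr1 => /D_notin.
split; first exact: (ints_nat hL).
exists p%:R, 0; split; rewrite -?x0 ?eval0 //; first exact: (sr_nat hK).
by apply/(prime_aboveMl hP)/(prime_above_char hP).
Qed.

Lemma split_prime_over : lies_over K split_prime P.
Proof.
move=> x Kx; have def_x : x = x + 0 * al by rewrite mul0r addr0.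
have eval0 : split_eval x 0 = D * x by rewrite /split_eval !mulr0 mul0r addr0.
split=> [sx|Px].
  move: (sx); have Lx := sx.1; rewrite (split_primeE Kx (sr0 hK) def_x Lx) eval0.
  have Ix : ints K x by split=> //; case: Lx.
  by case/(prime_above_mul hP) => // /D_notin.
have Ix := prime_above_ints hP Px.
apply/(split_primeE Kx (sr0 hK) def_x (ints_quad_sub Ix)).
by rewrite eval0; apply/(prime_aboveMl hP).
Qed.
End SplitPrime.

Lemma split_prime_opp_neq b : ints K b -> P (b ^+ 2 - a%:~R) ->
  ~ (split_prime b (al - b) <-> split_prime (- b) (al - b)).
Proof.
move=> ints_b Pb [to_opp _].
have Lx : ints L (al - b) by apply: (intsB hL ints_quad_gen); apply: ints_quad_sub.
have Knb : K (- b) by apply: (srN hK); case: ints_b.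
have def_x : al - b = - b + 1 * al by rewrite mul1r addrC.
have /to_opp : split_prime b (al - b).
  split=> //; exists (- b), 1; split=> //; first exact: (sr1 hK).
  by rewrite /split_eval mulr1 mulrN addNr; apply: (prime_above0 hP).
case=> _ [u [v [Ku Kv def_x' Puv]]].
have [eu ev] := quad_coord_uniq Knb (sr1 hK) Ku Kv (etrans (esym def_x) def_x').
move: Puv; rewrite /split_eval -eu -ev (_ : _ + _ = - (2%:R * D * b)); last by ring.
move/(prime_aboveN hP); rewrite opprK.
case/(prime_above_mul hP) => //; first exact/(intsM hK)/ints_D/(ints_nat hK).
  case/(prime_above_mul hP); [exact: (ints_nat hK) | exact: ints_D | | exact: D_notin].
  move=> P2; have /(prime_above_int hK p_pr hP) : P (2%:Z)%:~R := P2.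
  exact/negP/odd_prime_ndvd2.
move=> Pb'; apply: (negP ndvd_pa); apply/(prime_above_int hK p_pr hP).
have -> : a%:~R = b * b - (b ^+ 2 - a%:~R) :> algC by ring.
by apply/(prime_aboveB hP) => //; apply/(prime_aboveMl hP).
Qed.

Lemma split_prime_unique Q c : prime_above L p Q -> lies_over K Q P ->
  ints K c -> P (c ^+ 2 - a%:~R) -> Q (al - c) -> forall x, Q x <-> split_prime c x.
Proof.
move=> hQ QP ints_c Pc Qc x.
have ints_DL : ints L D := ints_quad_sub ints_D.
have [Lx|nLx] := classic (ints L x); last first.
  by split=> [/(prime_above_ints hQ)|[]].
have [u [v [Ku Kv def_x]]] : quad K al x := Lx.1.
have [_ Dv] := ints_quad_coord Lx Ku Kv def_x.
have K_eval : K (split_eval c u v) by case: (ints_split_eval ints_c Lx Ku Kv def_x).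
have Dx : D * x = split_eval c u v + (D * v) * (al - c) by rewrite /split_eval def_x; ring.
rewrite (split_primeE c Ku Kv def_x Lx) -(QP _ K_eval).
have QDv : Q ((D * v) * (al - c)) by apply/(prime_aboveMl hQ)/Qc/ints_quad_sub.
split=> [Qx|Qe].
  rewrite -[split_eval _ _ _](addrK (D * v * (al - c))) -Dx.
  exact/(prime_aboveB hQ)/QDv/(prime_aboveMl hQ).
have /(prime_above_mul hQ) : Q (D * x) by rewrite Dx; apply: (prime_aboveD hQ).
by case=> // /(QP _ ints_D.1)/D_notin.
Qed.

(* P splits as Q_b Q_(-b) where b^2 = a mod P, since (al - b)(al + b) lies in P. *)
Theorem quad_splits : (forall n z, (2 ^ n.+2)%N.-primitive_root z -> K (z + z^-1)) ->
  exists Q1 Q2 : subsetC,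
    [/\ prime_above L p Q1 /\ lies_over K Q1 P, prime_above L p Q2 /\ lies_over K Q2 P,
        (exists x, ~ (Q1 x <-> Q2 x))
      & forall Q, prime_above L p Q -> lies_over K Q P ->
          (forall x, Q x <-> Q1 x) \/ (forall x, Q x <-> Q2 x)].
Proof.
move=> K_cos; have [b ints_b Pb] := square_mod_prime_above hK p_pr p_odd hP K_cos ndvd_pa.
have ints_nb := intsN hK ints_b; have Pnb : P ((- b) ^+ 2 - a%:~R) by rewrite sqrrN.
exists (split_prime b), (split_prime (- b)); split.
- by split; [apply: split_prime_above | apply: split_prime_over].
- by split; [apply: split_prime_above | apply: split_prime_over].
- by exists (al - b); apply: split_prime_opp_neq.
move=> Q hQ QP; have ints_al_b c : ints K c -> ints L (al - c).
  by move=> ints_c; apply/(intsB hL ints_quad_gen)/ints_quad_sub.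
have : Q ((al - b) * (al - - b)).
  have Kab : K (a%:~R - b ^+ 2) by apply/(srB hK Ka)/(srX hK); case: ints_b.
  rewrite (_ : _ * _ = a%:~R - b ^+ 2); last by rewrite -al2; ring.
  by apply/(QP _ Kab); rewrite -opprB; apply: (prime_aboveN hP).
case/(prime_above_mul hQ); [exact: ints_al_b | exact: ints_al_b | |] => Qab.
  by left; apply: split_prime_unique.
by right; apply: split_prime_unique.
Qed.
End QuadraticExtension.

(** * Degrees and splitting in towers *)

Section Dimension.
Variable K : subsetC.
Hypothesis hKf : fieldQ K.
Let hK : subringQ K := hKf.1.

Definition in_span m (c : 'I_m -> algC) x :=
  exists2 A : 'I_m -> algC, (forall j, K (A j)) & x = \sum_j A j * c j.

Definition free_over n (b : 'I_n -> algC) :=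
  forall l : 'I_n -> algC, (forall i, K (l i)) -> \sum_i l i * b i = 0 -> forall i, l i = 0.

Lemma in_span_elim_last m (c : 'I_m.+1 -> algC) (A B : 'I_m.+1 -> algC) r :
  (forall j, K (A j)) -> (forall j, K (B j)) -> K r -> A ord_max = r * B ord_max ->
  in_span (fun j => c (widen_ord (leqnSn m) j))
    (\sum_j A j * c j - r * \sum_j B j * c j).
Proof.
move=> KA KB Kr eq_max.
exists (fun j => A (widen_ord (leqnSn m) j) - r * B (widen_ord (leqnSn m) j)).
  by move=> j; apply/(srB hK)/(srM hK).
rewrite !big_ord_recr /= eq_max mulrDr mulr_sumr mulrA opprD addrACA subrr.
by rewrite addr0 -sumrB; apply: eq_bigr => j _; rewrite mulrBl mulrA.
Qed.

Lemma free_over_pivot n (b : 'I_n.+1 -> algC) i0 (r : 'I_n -> algC) :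
  (forall k, K (r k)) -> free_over b -> free_over (fun k => b (lift i0 k) - r k * b i0).
Proof.
move=> Kr free_b l Kl sum0.
pose l' i := if unlift i0 i is Some k then l k else - \sum_k l k * r k.
have Kl' i : K (l' i).
  rewrite /l'; case: (unlift i0 i) => [k|] //.
  by apply/(srN hK); apply: (sr_sum hK) => k; apply/(srM hK).
suff sum0' : \sum_i l' i * b i = 0.
  by move=> k; have := free_b l' Kl' sum0' (lift i0 k); rewrite /l' liftK.
rewrite (bigD1_ord i0) //= /l' unlift_none; under eq_bigr do rewrite liftK.
move: sum0; rewrite (eq_bigr (fun k => l k * b (lift i0 k) - l k * r k * b i0)) => [|k _].
  by rewrite sumrB -mulr_suml mulNr addrC.
by rewrite mulrBr mulrA.
Qed.

(* Steinitz exchange, eliminating the last spanning vector by a pivot. *)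
Lemma free_span_leq m n (c : 'I_m -> algC) (b : 'I_n -> algC) :
  (forall i, in_span c (b i)) -> free_over b -> (n <= m)%N.
Proof.
elim: m n c b => [|m IH] [|n] // c b span_b free_b.
  have b0 i : b i = 0 by have [A _ ->] := span_b i; rewrite big_ord0.
  have := free_b (fun _ => 1) (fun _ => sr1 hK); under eq_bigr do rewrite b0 mulr0.
  by rewrite big1 // => /(_ erefl ord0)/eqP; rewrite oner_eq0.
have /fin_all_exists2[A KA def_b] := span_b.
pose c' j := c (widen_ord (leqnSn m) j).
have [[i0 nz_i0]|all0] := classic (exists i0, A i0 ord_max != 0); last first.
  apply: ltnW; apply: (IH n.+1 c' b) => // i.
  have -> : b i = \sum_j A i j * c j - 0 * \sum_j 0 * c j by rewrite def_b mul0r subr0.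
  apply: in_span_elim_last => //; try by move=> *; apply: (sr0 hK).
  by rewrite mulr0; apply/eqP/negPn/negP=> nz; apply: all0; exists i.
pose r i := A i ord_max / A i0 ord_max.
have Kr i : K (r i) by apply/(srM hK)/hKf.2.
apply: (IH n c' (fun k => b (lift i0 k) - r (lift i0 k) * b i0)).
  by move=> k; rewrite !def_b; apply: in_span_elim_last => //; rewrite /r mulfVK.
exact: free_over_pivot.
Qed.
End Dimension.

Lemma ext_degreeP (K L : subsetC) n : ext_degree K L n <->
  (forall x, K x -> L x) /\
  exists b : 'I_n -> algC, [/\ forall i, L (b i), free_over K b & forall x, L x -> in_span K b x].
Proof. by []. Qed.

Lemma ext_degree_unique (K L : subsetC) n m : fieldQ K ->
  ext_degree K L n -> ext_degree K L m -> n = m.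
Proof.
move=> hKf /ext_degreeP[_ [b [Lb free_b span_b]]] /ext_degreeP[_ [c [Lc free_c span_c]]].
apply/eqP; rewrite eqn_leq.
rewrite (free_span_leq hKf (fun i => span_c _ (Lb i)) free_b).
by rewrite (free_span_leq hKf (fun i => span_b _ (Lc i)) free_c).
Qed.

Lemma ext_degree_refl (K : subsetC) : subringQ K -> ext_degree K K 1.
Proof.
move=> hK; split=> //; exists (fun _ => 1); split=> [_|l _|x Kx]; first exact: (sr1 hK).
  by rewrite big_ord1 mulr1 => l0 i; rewrite (ord1 i).
by exists (fun _ => x) => //; rewrite big_ord1 mulr1.
Qed.

Lemma split_lshift m n (i : 'I_m) : split (lshift n i) = inl i.
Proof. exact: (unsplitK (inl i)). Qed.

Lemma split_rshift m n (i : 'I_n) : split (rshift m i) = inr i.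
Proof. exact: (unsplitK (inr i)). Qed.

Lemma ext_degree_quad_tower (K M : subsetC) al m : fieldQ M -> (forall x, K x -> M x) ->
  ext_degree K M m -> M (al ^+ 2) -> ~ M al -> ext_degree K (quad M al) (m + m).
Proof.
move=> hMf KM /ext_degreeP[_ [e [Me free_e span_e]]] Mal2 M'al; have hM := hMf.1.
have hMal := quad_subring hM Mal2.
pose f k := match split k with inl i => e i | inr i => e i * al end.
have sum_f g : \sum_k g k * f k =
    \sum_i g (lshift m i) * e i + (\sum_i g (rshift m i) * e i) * al.
  rewrite big_split_ord mulr_suml; congr (_ + _); apply: eq_bigr => i _;
    by rewrite /f ?split_lshift ?split_rshift ?mulrA.
have M_sum g : (forall k, K (g k)) -> forall s : 'I_m -> 'I_(m + m), M (\sum_i g (s i) * e i).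
  by move=> Kg s; apply: (sr_sum hM) => i; apply/(srM hM)/Me/KM.
split=> [x /KM /(quad_sub al hM) //|]; exists f; split.
- move=> k; rewrite /f; case: (split k) => i; first exact/(quad_sub al hM)/Me.
  exact/(srM hMal)/(quad_gen _ hM)/(quad_sub al hM)/Me.
- move=> l Kl; rewrite sum_f => l0.
  have [l1 l2] := quad_coord_eq0 hMf M'al (M_sum l Kl _) (M_sum l Kl _) l0.
  move=> k; rewrite -(splitK k); case: (split k) => i /=.
    by apply: (free_e (fun i => l (lshift m i))).
  by apply: (free_e (fun i => l (rshift m i))).
move=> _ [u [v [Mu Mv ->]]]; have [cu Kcu ->] := span_e _ Mu; have [cv Kcv ->] := span_e _ Mv.
exists (fun k => match split k with inl i => cu i | inr i => cv i end).
  by move=> k; case: (split k).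
by rewrite sum_f; congr (_ + _ * _); apply: eq_bigr => i _; rewrite ?split_lshift ?split_rshift.
Qed.

Definition splits_into p (K L : subsetC) n (P : subsetC) :=
  exists Qs : 'I_n -> subsetC,
    [/\ (forall i, prime_above L p (Qs i) /\ lies_over K (Qs i) P),
        (forall i j, i != j -> exists x, ~ (Qs i x <-> Qs j x))
      & (forall Q, prime_above L p Q -> lies_over K Q P ->
           exists i, forall x, Q x <-> Qs i x)].

Definition splits_completely_deg p (K L : subsetC) m :=
  ext_degree K L m /\ forall P, prime_above K p P -> splits_into p K L m P.

Lemma splits_completely_aboveP p (K L : subsetC) m : fieldQ K ->
  splits_completely_deg p K L m -> splits_completely_above p K L.
Proof. by move=> hKf [degm split_m] n degn; rewrite (ext_degree_unique hKf degn degm). Qed.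

Lemma lies_over_prime_above_eq p (K Q P : subsetC) : prime_above K p Q -> prime_above K p P ->
  lies_over K Q P -> forall x, Q x <-> P x.
Proof.
move=> hQ hP QP x; split=> [Qx|Px]; first exact/(QP _ (prime_above_ints hQ Qx).1).
exact/(QP _ (prime_above_ints hP Px).1).
Qed.

Lemma splits_into_refl p (K P : subsetC) : prime_above K p P -> splits_into p K K 1 P.
Proof.
move=> hP; exists (fun _ => P); split=> [_|i j|Q hQ QP]; first by split=> // x _.
  by rewrite !ord1 eqxx.
by exists ord0; apply: (lies_over_prime_above_eq hQ hP QP).
Qed.

Lemma prime_above_restrict p (M L Q : subsetC) : subringQ M -> (forall x, M x -> L x) ->
  prime_above L p Q -> prime_above M p (fun x => M x /\ Q x).
Proof.
move=> hM ML [QL Q0 QB QM [Q'1 Qmul Qp]]; split=> [x [Mx /QL[]]|||c x [Mc c_Aint] [Mx Qx]|] //.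
- by split; [apply: sr0 | ].
- by move=> x y [Mx Qx] [My Qy]; split; [apply: srB | apply: QB].
- by split; [apply: srM | apply: QM => //; split=> //; apply: ML].
split=> [[_ /Q'1]//|x y [Mx x_Aint] [My y_Aint] [_ /Qmul]|]; last by split; [apply: sr_nat | ].
by case=> [||Qx|Qy]; [split=> //; apply: ML | split=> //; apply: ML | left | right].
Qed.

Lemma lies_over_neq p (M Q Q' R R' : subsetC) : prime_above M p R -> prime_above M p R' ->
  lies_over M Q R -> lies_over M Q' R' -> (exists x, ~ (R x <-> R' x)) ->
  exists x, ~ (Q x <-> Q' x).
Proof.
move=> hR hR' QR QR' [x neq_x]; exists x.
have Mx : M x.
  have [Rx|nRx] := classic (R x); first exact: (prime_above_ints hR Rx).1.
  have [R'x|nR'x] := classic (R' x); first exact: (prime_above_ints hR' R'x).1.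
  by case: neq_x; split.
by rewrite (QR _ Mx) (QR' _ Mx).
Qed.

Section SplittingTower.
Variables (p : nat) (K M : subsetC) (al : algC) (a : int) (m : nat) (P : subsetC).
Hypotheses (p_pr : prime p) (p_odd : odd p) (hMf : fieldQ M) (KM : forall x, K x -> M x).
Hypotheses (M_cos : forall n z, (2 ^ n.+2)%N.-primitive_root z -> M (z + z^-1)).
Hypotheses (al2 : al ^+ 2 = a%:~R) (ndvd_pa : ~~ (p %| `|a|)%N) (M'al : ~ M al).

Let L := quad M al.
Let ML : forall x, M x -> L x := quad_sub al hMf.1.

(* A prime of L above P restricts to a prime R i of M above P, and each R i
   splits in two in L. *)
Lemma splits_into_quad_tower : splits_into p K M m P -> splits_into p K L (m + m) P.
Proof.
move=> [R [hR distR exhR]].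
have /fin_all_exists[F hF] : forall i : 'I_m, exists Q12 : subsetC * subsetC,
    [/\ prime_above L p Q12.1 /\ lies_over M Q12.1 (R i),
        prime_above L p Q12.2 /\ lies_over M Q12.2 (R i),
        (exists x, ~ (Q12.1 x <-> Q12.2 x))
      & forall Q, prime_above L p Q -> lies_over M Q (R i) ->
          (forall x, Q x <-> Q12.1 x) \/ (forall x, Q x <-> Q12.2 x)].
  move=> i; have [Q1 [Q2 splitQ]] := quad_splits hMf al2 M'al p_pr p_odd ndvd_pa (hR i).1 M_cos.
  by exists (Q1, Q2).
pose idx (k : 'I_(m + m)) := match split k with inl i => i | inr i => i end.
pose Qs (k : 'I_(m + m)) := match split k with inl i => (F i).1 | inr i => (F i).2 end.
have Qs_over k : prime_above L p (Qs k) /\ lies_over M (Qs k) (R (idx k)).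
  by rewrite /Qs /idx; case: (split k) => i; case: (hF i) => [[? ?] [? ?] _ _].
exists Qs; split.
- move=> k; have [hQ QR] := Qs_over k; split=> // x Kx.
  by rewrite (QR _ (KM Kx)); apply: (hR (idx k)).2.
- move=> k k'; have [eq_idx|] := eqVneq (idx k) (idx k'); last first.
    by move/distR/(lies_over_neq (hR _).1 (hR _).1 (Qs_over k).2 (Qs_over k').2).
  rewrite /Qs -(splitK k) -(splitK k'); move: eq_idx; rewrite /idx.
  case: (split k) (split k') => i [] i' /= ->; rewrite ?split_lshift ?split_rshift ?eqxx //= => _.
    by case: (hF i') => _ _ [x nx] _; exists x.
  by case: (hF i') => _ _ [x nx] _; exists x => -[to_1 to_2]; apply: nx.
move=> Q hQ QP; pose QM x := M x /\ Q x.
have hQM : prime_above M p QM := prime_above_restrict hMf.1 ML hQ.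
have [i QMi] : exists i, forall x, QM x <-> R i x.
  by apply: exhR => // x Kx; rewrite -(QP _ Kx); split=> [[]|] //; split=> //; apply: KM.
have QRi : lies_over M Q (R i) by move=> x Mx; rewrite -QMi; split=> [|[]] //.
case: (hF i) => _ _ _ /(_ Q hQ QRi) [QQ|QQ].
  by exists (lshift m i) => x; rewrite /Qs split_lshift.
by exists (rshift m i) => x; rewrite /Qs split_rshift.
Qed.
End SplittingTower.

Lemma splits_completely_deg_Qinf_adj p s0 s : prime p -> odd p ->
  (forall al, al \in s -> exists2 a : int, al ^+ 2 = a%:~R & ~~ (p %| `|a|)%N) ->
  exists m, splits_completely_deg p (Qinf_adj s0) (Qinf_adj (s ++ s0)) m.
Proof.
move=> p_pr p_odd; have hKf := Qinf_adj_field s0.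
elim: s => [|al s IH] sqrt_s.
  by exists 1%N; split=> [|P]; [apply: ext_degree_refl hKf.1 | apply: splits_into_refl].
have [a al2 ndvd_pa] := sqrt_s al (mem_head _ _).
have [m [degm split_m]] := IH (fun b s_b => sqrt_s b (mem_behead (s := al :: s) s_b)).
have hMf := Qinf_adj_field (s ++ s0).
have Qal2 : Qbase (al ^+ 2) by exists a%:~R; rewrite al2 rmorph_int.
rewrite /= (Qinf_adj_cons _ Qal2).
have [M_al|M'al] := classic (Qinf_adj (s ++ s0) al).
  by rewrite quad_id //; [exists m | apply: hMf.1].
exists (m + m)%N; split=> [|P hP].
  by apply: ext_degree_quad_tower => //; [apply: Qinf_adj_catl | apply: Qbase_sub hMf.1 Qal2].
apply: splits_into_quad_tower al2 ndvd_pa M'al (split_m P hP) => //.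
  exact: Qinf_adj_catl.
exact: Qinf_adj_cos.
Qed.

Lemma sqrt_intK (d : int) : sqrt_int d ^+ 2 = d%:~R.
Proof. exact: sqrtCK. Qed.

Theorem corollary2p9 (p : nat) (r : nat) (d : nat -> int) :
  prime p -> odd p -> (1 <= r)%N ->
  (forall i, (1 <= i <= r)%N -> squarefree_int (d i)) ->
  (~~ (p %| `|d 1%N|)%N ->
     splits_completely_above p
       (Qinf_adj [seq sqrt_int (d i) | i <- iota 2 r.-1])
       (Qinf_adj [seq sqrt_int (d i) | i <- iota 1 r]))
  /\
  (~~ (p %| `|(\prod_(1 <= i < r) d i)%R|)%N ->
     splits_completely_above p Qinf
       (Qinf_adj [seq sqrt_int (d i) | i <- iota 1 r.-1])).
Proof.
move=> p_pr p_odd r_gt0 _; split=> [ndvd_pd1|ndvd_prod].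
  case: r r_gt0 => // r _.
  have [|m split_m] := splits_completely_deg_Qinf_adj
    [seq sqrt_int (d i) | i <- iota 2 r] (s := [:: sqrt_int (d 1%N)]) p_pr p_odd.
    by move=> al; rewrite inE => /eqP ->; exists (d 1%N); rewrite ?sqrt_intK.
  exact: splits_completely_aboveP (Qinf_adj_field _) split_m.
have [|m split_m] := splits_completely_deg_Qinf_adj
  [::] (s := [seq sqrt_int (d i) | i <- iota 1 r.-1]) p_pr p_odd.
  move=> _ /mapP[i iota_i ->]; exists (d i); rewrite ?sqrt_intK //.
  apply: contra ndvd_prod => dvd_pdi; rewrite (big_rem i) /=; last by rewrite /index_iota subn1.
  by rewrite abszM dvdn_mulr.
by rewrite cats0 in split_m; apply: splits_completely_aboveP (Qinf_adj_field _) split_m.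
Qed.
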